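(* For any set $\Gamma\subseteq\mathcal{L}^-$, if $\Gamma$ is consistent (with respect to $\mathbf{ELCR}^-$), then $\Gamma$ is satisfiable, i.e., there are a $k$-sight model $M=(\mathbf{D},\mathbf{I},\Sigma,\sim)$ and $\sigma\in\Sigma$ with $M,\sigma\models\varphi$ for all $\varphi\in\Gamma$. As a consequence, $\mathsf{ELCR}^-$ is compact: a set of $\mathcal{L}^-$-formulas is satisfiable whenever each of its finite subsets is.
   Context: Fix a natural number $k$ and a vocabulary: $Pred$ (predicate symbols with arities, containing binary $R$), a nonempty finite set $Cons$ of constants, $Var=\{x,y\}$; terms $\mathsf{Term}=Cons\cup Var$. $\mathcal{L}_{\mathsf{B}}$: $\alpha::=P(t_1,\dots,t_m)\mid t_1\equiv t_2\mid\neg\alpha\mid(\alpha\land\alpha)$. $\mathcal{L}^-$: $\varphi::=\alpha\mid K_zt\mid\neg\varphi\mid(\varphi\land\varphi)\mid K_z\alpha$ with $\alpha\in\mathcal{L}_{\mathsf{B}}$, $z\in Var$, $t\in\mathsf{Term}$. $\langle K_z\rangle\beta:=\neg K_z\neg\beta$; $K_z\mathcal{T}:=\bigwedge_{t\in\mathcal{T}}K_zt$; $\alpha[t_1/t_2]$ replaces every occurrence of $t_2$ in $\alpha$ by $t_1$; $\mathsf{D}^0t_1t_2:=t_1\equiv t_2$, $\mathsf{D}^{n+1}t_1t_2:=\mathsf{D}^nt_1t_2\lor\bigvee_{t\in\mathsf{Term}}(\mathsf{D}^nt_1t\land(Rtt_2\lor Rt_2t))$; for $\mathcal{T}\subseteq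 Cons$, $K_zz'=\mathcal{T}:=\bigwedge_{c\in\mathcal{T}}\langle K_z\rangle z'\equiv c\land\bigwedge_{c\in Cons\setminus\mathcal{T}}K_z\neg z'\equiv c$. Models: $M=(\mathbf{D},\mathbf{I},\Sigma,\sim)$ with $\mathbf{D}$ nonempty finite; $\mathbf{I}(P)\subseteq\mathbf{D}^m$ for $m$-ary $P$, $\mathbf{R}:=\mathbf{I}(R)$ serial; $\mathbf{I}(c)\in\mathbf{D}$ for $c\in Cons$, every element of $\mathbf{D}$ named by some constant; $\Sigma\subseteq\mathbf{D}^{Var}$ nonempty (situations); $\sim_x,\sim_y$ equivalence relations on $\Sigma$. $\mathbb{D}^0(s)=\{s\}$, $\mathbb{D}^{m+1}(s)=\mathbb{D}^m(s)\cup\{t:\exists u\in\mathbb{D}^m(s),(u,t)\in\mathbf{R}\text{ or }(t,u)\in\mathbf{R}\}$. $M$ is $k$-sight if $\sigma\sim_z\sigma'$ implies $\sigma(z')=\sigma'(z')$ for every $z'\in Var$ with $\sigma(z')\in\mathbb{D}^k(\sigma(z))$. Semantics: $t^{(\mathbf{I},\sigma)}$ is $\mathbf{I}(t)$ or $\sigma(t)$; $P(t_1,\dots,t_m)$ true iff the tuple of values is in $\mathbf{I}(P)$; $t_1\equiv t_2$ iff equal values; Boolean standard; $K_zt$ true at $\sigma$ iff $t$ has the same value at all $\sigma'\in\Sigma$ with $\sigma'\sim_z\sigma$; $K_z\varphi$ true at $\sigma$ iff $\varphi$ true at all $\sigma'\in\Sigma$ with $\sigma'\sim_z\sigma$. $\mathbf{ELCR}^-$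 has axioms and rules (with $z,z'\in Var$, $t,t_i\in\mathsf{Term}$, $c\in Cons$): (Tau) propositional tautologies; (A1) $t_1\equiv t_1$; (A2) $t_1\equiv t_2\to t_2\equiv t_1$; (A3) $t_1\equiv t_2\land t_2\equiv t_3\to t_1\equiv t_3$; (A4) $t_1\equiv t_2\to(\alpha\leftrightarrow\alpha[t_1/t_2])$ for $\alpha\in\mathcal{L}_{\mathsf{B}}$; (MP) from $\varphi\to\psi$ and $\varphi$ infer $\psi$; (Seriality) $\bigvee_{t\in Cons}Rct$; (At-Some-Where) $\bigvee_{c\in Cons}z\equiv c$; ($k$-sight) $\mathsf{D}^kzt\to K_zt$; (K) $K_z(\alpha\to\beta)\to(K_z\alpha\to K_z\beta)$, $\alpha,\beta\in\mathcal{L}_{\mathsf{B}}$; (T) $K_z\alpha\to\alpha$, $\alpha\in\mathcal{L}_{\mathsf{B}}$; (Knowledge-Ground) $K_zz'=\mathcal{T}\to(K_z\alpha\leftrightarrow\bigwedge_{c\in\mathcal{T}}\alpha[c/z'])$ for $\mathcal{T}\subseteq Cons$, $\{z,z'\}=\{x,y\}$, $\alpha\in\mathcal{L}_{\mathsf{B}}$; (K-Additivity) from $\varphi\to\alpha$ infer $\varphi\to K_z\alpha$, where $\varphi=K_z\alpha_1\land\dots\land K_z\alpha_n\land\langle K_z\rangle\beta_1\land\dots\land\langle K_z\rangle\beta_m$, $1\le m+n$, $\alpha,\alpha_i,\beta_j\in\mathcal{L}_{\mathsf{B}}$; (K-Elimination) from $\varphi\to(K_z\alpha\to\beta)$ infer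 $\varphi\to(\alpha\to\beta)$, where $\varphi=K_{z'}\alpha_1\land\dots\land K_{z'}\alpha_n\land\langle K_{z'}\rangle\beta_1\land\dots\land\langle K_{z'}\rangle\beta_m$, $1\le m+n$, $\alpha,\beta,\alpha_i,\beta_j\in\mathcal{L}_{\mathsf{B}}$, $\{z,z'\}=\{x,y\}$; (De-Re-Knowledge) $t\equiv c\to(K_zt\leftrightarrow K_zt\equiv c)$; (Structure-Knowledge) $(K_z\mathcal{T}\land\alpha)\to K_z\alpha$ for $\alpha\in\mathcal{L}_{\mathsf{B}}$ all of whose terms lie in $\mathcal{T}\subseteq\mathsf{Term}$. $\vdash\varphi$ means $\varphi$ is derivable. A set $\Delta$ is inconsistent if $\vdash\bigwedge\Gamma_0\to\bot$ for some finite $\Gamma_0\subseteq\Delta$, and consistent otherwise. *)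

From mathcomp Require Import all_boot.
From Stdlib Require List.
Set Implicit Arguments.
Unset Strict Implicit.
Unset Printing Implicit Defensive.

Inductive var := vx | vy.

Definition other (z : var) : var := match z with vx => vy | vy => vx end.

Section ELCR.

(* Vocabulary: Pred = the predicate symbols other than the distinguished
   binary symbol R (which gets its own constructor), with arities;
   Cons = the (finite) set of constants. *)
Context (Pred : Type) (arity : Pred -> nat) (Cons : finType).

Inductive term := TCons (c : Cons) | TVar (v : var).

Definition term_eqb (s t : term) : bool :=
  match s, t with
  | TCons a, TCons b => a == b
  | TVar vx, TVar vx => true
  | TVar vy, TVar vy => true
  | _, _ => false
  end.

Definition all_terms : seq term :=
  [seq TCons c | c <- enum Cons] ++ [:: TVar vx; TVar vy].

Inductive bform :=
| BP (P : Pred) (ts : (arity P).-tuple term)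
| BR (t1 t2 : term)
| BEq (t1 t2 : term)
| BNeg (a : bform)
| BAnd (a b : bform).

Inductive form :=
| FP (P : Pred) (ts : (arity P).-tuple term)
| FR (t1 t2 : term)
| FEq (t1 t2 : term)
| FKt (z : var) (t : term)
| FNeg (p : form)
| FAnd (p q : form)
| FKa (z : var) (a : bform).

Fixpoint emb (a : bform) : form :=
  match a with
  | BP P ts => FP ts
  | BR t1 t2 => FR t1 t2
  | BEq t1 t2 => FEq t1 t2
  | BNeg a => FNeg (emb a)
  | BAnd a b => FAnd (emb a) (emb b)
  end.

Definition bTop : bform := BEq (TVar vx) (TVar vx).
Definition bBot : bform := BNeg bTop.
Definition bOr (a b : bform) : bform := BNeg (BAnd (BNeg a) (BNeg b)).
Definition bImp (a b : bform) : bform := BNeg (BAnd a (BNeg b)).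
Fixpoint bigOrB (l : seq bform) : bform :=
  match l with
  | [::] => bBot
  | [:: a] => a
  | a :: l => bOr a (bigOrB l)
  end.

Definition fTop : form := emb bTop.
Definition fBot : form := emb bBot.
Definition fImp (p q : form) : form := FNeg (FAnd p (FNeg q)).
Definition fIff (p q : form) : form := FAnd (fImp p q) (fImp q p).
Fixpoint bigAnd (l : seq form) : form :=
  match l with
  | [::] => fTop
  | [:: p] => p
  | p :: l => FAnd p (bigAnd l)
  end.
Fixpoint bigOrF (l : seq form) : form :=
  match l with
  | [::] => fBot
  | [:: p] => p
  | p :: l => FNeg (FAnd (FNeg p) (FNeg (bigOrF l)))
  end.

Definition dia (z : var) (b : bform) : form := FNeg (FKa z (BNeg b)).

Definition KT (z : var) (T : seq term) : form := bigAnd [seq FKt z t | t <- T].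

Definition tsubst (t1 t2 s : term) : term := if term_eqb s t2 then t1 else s.
Fixpoint bsubst (t1 t2 : term) (a : bform) : bform :=
  match a with
  | BP P ts => BP (map_tuple (tsubst t1 t2) ts)
  | BR s1 s2 => BR (tsubst t1 t2 s1) (tsubst t1 t2 s2)
  | BEq s1 s2 => BEq (tsubst t1 t2 s1) (tsubst t1 t2 s2)
  | BNeg a => BNeg (bsubst t1 t2 a)
  | BAnd a b => BAnd (bsubst t1 t2 a) (bsubst t1 t2 b)
  end.

Fixpoint bterms (a : bform) : seq term :=
  match a with
  | BP P ts => tval ts
  | BR s1 s2 => [:: s1; s2]
  | BEq s1 s2 => [:: s1; s2]
  | BNeg a => bterms a
  | BAnd a b => bterms a ++ bterms b
  end.

Fixpoint Dn (n : nat) (t1 t2 : term) : bform :=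
  match n with
  | 0 => BEq t1 t2
  | n'.+1 => bOr (Dn n' t1 t2)
      (bigOrB [seq BAnd (Dn n' t1 t) (bOr (BR t t2) (BR t2 t)) | t <- all_terms])
  end.

Definition Kzeq (z z' : var) (T : {set Cons}) : form :=
  bigAnd ([seq dia z (BEq (TVar z') (TCons c)) | c <- enum T] ++
          [seq FKa z (BNeg (BEq (TVar z') (TCons c))) | c <- enum (~: T)]).

Definition kphi (z : var) (as_ bs : seq bform) : form :=
  bigAnd ([seq FKa z a | a <- as_] ++ [seq dia z b | b <- bs]).

(* propositional tautologies: true under every valuation of the
   propositional atoms (atomic L_B formulas, K_z t, K_z alpha) *)
Fixpoint peval (v : form -> bool) (p : form) : bool :=
  match p with
  | FNeg p => ~~ peval v p
  | FAnd p q => peval v p && peval v q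
  | _ => v p
  end.
Definition taut (p : form) : Prop := forall v, peval v p = true.

Inductive prov (k : nat) : form -> Prop :=
| Ax_Tau p : taut p -> prov k p
| Ax_A1 t : prov k (FEq t t)
| Ax_A2 t1 t2 : prov k (fImp (FEq t1 t2) (FEq t2 t1))
| Ax_A3 t1 t2 t3 : prov k (fImp (FAnd (FEq t1 t2) (FEq t2 t3)) (FEq t1 t3))
| Ax_A4 t1 t2 a : prov k (fImp (FEq t1 t2) (fIff (emb a) (emb (bsubst t1 t2 a))))
| R_MP p q : prov k (fImp p q) -> prov k p -> prov k q
| Ax_Seriality (c : Cons) :
    prov k (bigOrF [seq FR (TCons c) (TCons t) | t <- enum Cons])
| Ax_AtSomeWhere z :
    prov k (bigOrF [seq FEq (TVar z) (TCons c) | c <- enum Cons])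
| Ax_ksight z t : prov k (fImp (emb (Dn k (TVar z) t)) (FKt z t))
| Ax_K z a b : prov k (fImp (FKa z (bImp a b)) (fImp (FKa z a) (FKa z b)))
| Ax_T z a : prov k (fImp (FKa z a) (emb a))
| Ax_KGround z (T : {set Cons}) a :
    prov k (fImp (Kzeq z (other z) T)
              (fIff (FKa z a)
                    (bigAnd [seq emb (bsubst (TCons c) (TVar (other z)) a) | c <- enum T])))
| R_KAdd z as_ bs a :
    0 < size as_ + size bs ->
    prov k (fImp (kphi z as_ bs) (emb a)) ->
    prov k (fImp (kphi z as_ bs) (FKa z a))
| R_KElim z as_ bs a b :
    0 < size as_ + size bs ->
    prov k (fImp (kphi (other z) as_ bs) (fImp (FKa z a) (emb b))) ->
    prov k (fImp (kphi (other z) as_ bs) (fImp (emb a) (emb b)))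
| Ax_DeRe z t (c : Cons) :
    prov k (fImp (FEq t (TCons c)) (fIff (FKt z t) (FKa z (BEq t (TCons c)))))
| Ax_StructK z (T : seq term) a :
    (forall t, List.In t (bterms a) -> List.In t T) ->
    prov k (fImp (FAnd (KT z T) (emb a)) (FKa z a)).

Definition inconsistent (k : nat) (G : form -> Prop) : Prop :=
  exists l : seq form, (forall p, List.In p l -> G p) /\ prov k (fImp (bigAnd l) fBot).
Definition consistent (k : nat) (G : form -> Prop) : Prop := ~ inconsistent k G.

(* Models. Sigma ⊆ D^Var is represented as a set of pairs (sigma(x), sigma(y)). *)
Record model := Model {
  dom : finType;
  interp : forall P : Pred, (arity P).-tuple dom -> Prop;
  relR : dom -> dom -> Prop;
  relR_serial : forall d, exists e, relR d e;
  icons : Cons -> dom;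
  icons_onto : forall d, exists c, icons c = d;
  sits : dom * dom -> Prop;
  sits_ne : exists s, sits s;
  sim : var -> dom * dom -> dom * dom -> Prop;
  sim_refl : forall z s, sits s -> sim z s s;
  sim_sym : forall z s s', sits s -> sits s' -> sim z s s' -> sim z s' s;
  sim_trans : forall z s1 s2 s3, sits s1 -> sits s2 -> sits s3 ->
      sim z s1 s2 -> sim z s2 s3 -> sim z s1 s3
}.

Section Sem.
Variable M : model.

Definition sval (s : dom M * dom M) (v : var) : dom M :=
  match v with vx => s.1 | vy => s.2 end.

Definition teval (s : dom M * dom M) (t : term) : dom M :=
  match t with TCons c => @icons M c | TVar v => sval s v end.

Fixpoint bsat (s : dom M * dom M) (a : bform) : Prop :=
  match a with
  | BP P ts => interp (map_tuple (teval s) ts)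
  | BR t1 t2 => @relR M (teval s t1) (teval s t2)
  | BEq t1 t2 => teval s t1 = teval s t2
  | BNeg a => ~ bsat s a
  | BAnd a b => bsat s a /\ bsat s b
  end.

Fixpoint sat (s : dom M * dom M) (p : form) : Prop :=
  match p with
  | FP P ts => interp (map_tuple (teval s) ts)
  | FR t1 t2 => @relR M (teval s t1) (teval s t2)
  | FEq t1 t2 => teval s t1 = teval s t2
  | FKt z t => forall s', @sits M s' -> @sim M z s' s -> teval s' t = teval s t
  | FNeg p => ~ sat s p
  | FAnd p q => sat s p /\ sat s q
  | FKa z a => forall s', @sits M s' -> @sim M z s' s -> bsat s' a
  end.

Fixpoint DD (m : nat) (d : dom M) : dom M -> Prop :=
  match m with
  | 0 => fun e => e = d
  | m'.+1 => fun e => DD m' d e \/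
      exists u, DD m' d u /\ (@relR M u e \/ @relR M e u)
  end.

Definition ksight (k : nat) : Prop :=
  forall z s s', @sits M s -> @sits M s' -> @sim M z s s' ->
  forall z', DD k (sval s z) (sval s z') -> sval s z' = sval s' z'.

End Sem.

Definition satisfiable (k : nat) (G : form -> Prop) : Prop :=
  exists M : model, ksight M k /\
  exists s, @sits M s /\ forall p, G p -> @sat M s p.

End ELCR.

(* The only delicate case is K-Elimination: splitting the
   [~_z]-class of the current situation [s] into [{s}] and the rest keeps k-sight and every
   [~_(other z)]-fact at [s], while making [K_z a] equivalent to [a] at [s].

   For completeness, extend a consistent set to a maximal consistent set [G] (Zorn's lemma).
   The canonical model has as domain the constants modulo [G]-provable equality; its situations
   are the assignments [z |-> c_z, other z |-> c] where [z = c_z] and [<K_z> other z = c] are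
   in [G]; and [~_z] relates the situations that agree on [z].  Knowledge-Ground makes [K_z a]
   hold exactly when all the instances [a[c/other z]] for such [c] lie in [G], which gives the
   truth lemma.  The model is k-sighted: if [c] lies within distance [k] of [c_z], then (k-sight),
   De-Re-Knowledge and (K) turn any other candidate [c' <> c] into [K_z ~ other z = c],
   contradicting [<K_z> other z = c].

   Compactness follows, since by soundness a finitely satisfiable set is consistent. *)

From Pilot Require Import Defs.
From mathcomp Require Import all_boot boolp classical_sets.
From Stdlib Require List.
From Stdlib Require Import Classical.
Set Implicit Arguments. Unset Strict Implicit. Unset Printing Implicit Defensive.

Lemma In_cat (T : Type) (x : T) (s1 s2 : seq T) :
  List.In x (s1 ++ s2) <-> List.In x s1 \/ List.In x s2.
Proof. exact: List.in_app_iff. Qed.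

Lemma In_map (T U : Type) (f : T -> U) (y : U) (s : seq T) :
  List.In y (map f s) <-> exists x, f x = y /\ List.In x s.
Proof. exact: List.in_map_iff. Qed.

Lemma In_filter (T : Type) (P : pred T) (x : T) (s : seq T) :
  List.In x (filter P s) <-> List.In x s /\ P x.
Proof. exact: List.filter_In. Qed.

Lemma In_mem (T : eqType) (x : T) (s : seq T) : List.In x s <-> x \in s.
Proof.
elim: s => [|a s IH] //=; rewrite in_cons IH eq_sym.
by split=> [[->|->]|/orP[/eqP|]]; rewrite ?eqxx ?orbT; auto.
Qed.

Lemma In_enum (T : finType) (x : T) (A : mem_pred T) :
  List.In x (enum_mem A) <-> in_mem x A.
Proof. by rewrite In_mem mem_enum. Qed.

Lemma allIn (T : Type) (P : pred T) (s : seq T) :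
  all P s <-> forall x, List.In x s -> P x.
Proof. exact: List.forallb_forall. Qed.

Lemma map_In_ext (T U : Type) (f g : T -> U) (s : seq T) :
  (forall x, List.In x s -> f x = g x) -> map f s = map g s.
Proof. exact: List.map_ext_in. Qed.

Lemma not_nor (P Q : Prop) : ~ (~ P /\ ~ Q) <-> P \/ Q.
Proof. by split=> [nnPQ | [P_|Q_] []] //; apply: NNPP => nPQ; apply: nnPQ; split=> ?; auto. Qed.

Lemma In_chain_bigcup (T : Type) (F : set (set T)) (G : set T) (l : seq T) :
  total_on F subset ->
  (forall q, List.In q l -> (\bigcup_(X in F) X)%classic q \/ G q) ->
  (forall q, List.In q l -> G q) \/
  exists2 X, F X & forall q, List.In q l -> X q \/ G q.
Proof.
move=> Ftot; elim: l => [|p l IH] lFG; first by left.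
have /IH [lG|[X FX lXG]] : forall q, List.In q l -> (\bigcup_(X in F) X)%classic q \/ G q.
- by move=> q ql; apply: lFG; right.
- case: (lFG p (or_introl erefl)) => [[Y FY Yp]|Gp].
    by right; exists Y => // q [<-|/lG]; auto.
  by left=> q [<-|/lG].
- right; case: (lFG p (or_introl erefl)) => [[Y FY Yp]|Gp].
    case: (Ftot X Y FX FY) => [XY|YX].
      by exists Y => // q [<-|/lXG [/XY|]]; auto.
    by exists X => // q [<-|/lXG]; auto.
  by exists X => // q [<-|/lXG]; auto.
Qed.

Ltac case_valuation :=
  let v := fresh "v" in intros v; simpl;
  repeat match goal with
         | |- context [peval v ?p] => case: (peval v p)
         | |- context [v ?x] => case: (v x)
         end; simpl; try done.

Section ELCR.
Context (Pred : Type) (arity : Pred -> nat) (Cons : finType).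
Local Notation form := (form arity Cons).
Local Notation bform := (bform arity Cons).
Local Notation term := (term Cons).
Local Notation tv := (@TVar Cons).
Local Notation tc := (@TCons Cons).
Local Notation feq := (FEq arity).
Local Notation beq := (BEq arity).
Local Notation TOP := (@fTop Pred arity Cons).
Local Notation BOT := (@fBot Pred arity Cons).
Local Notation bTOP := (@bTop Pred arity Cons).

Definition fImps (ps : seq form) (q : form) : form := foldr (@fImp _ _ _) q ps.

Lemma peval_fImps v ps q :
  peval v (fImps ps q) = all (peval v) ps ==> peval v q.
Proof.
elim: ps => [|p ps IH] //=; rewrite IH.
by case: (peval v p); case: (all _ _); case: (peval v q).
Qed.

Lemma peval_bigAnd v (l : seq form) :
  peval v TOP -> peval v (bigAnd l) = all (peval v) l.
Proof.
move=> vTop; elim: l => [|p l IH] //=.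
by case: l IH => [|q l] /= IH; rewrite ?andbT // IH.
Qed.

Lemma prov_fTop k : prov k TOP.
Proof. exact: Ax_A1. Qed.

Lemma prov_taut_consequence k (ps : seq form) q :
  (forall p, List.In p ps -> prov k p) ->
  (forall v, all (peval v) ps -> peval v q) -> prov k q.
Proof.
move=> prov_ps conseq.
have : prov k (fImps ps q).
  by apply: Ax_Tau => v; rewrite peval_fImps; apply/implyP/conseq.
elim: ps prov_ps {conseq} => [|p ps IH] //= prov_ps H.
apply: IH; first by move=> r Hr; apply: prov_ps; right.
by apply: R_MP H _; apply: prov_ps; left.
Qed.

Fixpoint map_terms (h : term -> term) (a : bform) : bform :=
  match a with
  | BP P ts => BP (map_tuple h ts)
  | BR t1 t2 => BR arity (h t1) (h t2)
  | BEq t1 t2 => beq (h t1) (h t2)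
  | BNeg a => BNeg (map_terms h a)
  | BAnd a b => BAnd (map_terms h a) (map_terms h b)
  end.

Lemma bsubstE t1 t2 (a : bform) : bsubst t1 t2 a = map_terms (tsubst t1 t2) a.
Proof. by elim: a => //= [a -> | a -> b ->]. Qed.

Lemma eq_in_map_terms (f g : term -> term) (a : bform) :
  (forall t, List.In t (bterms a) -> f t = g t) -> map_terms f a = map_terms g a.
Proof.
elim: a => /= [P ts|t1 t2|t1 t2|a IH|a IHa b IHb] H.
- by congr BP; apply: val_inj; apply: map_In_ext.
- by rewrite !H //; auto.
- by rewrite !H //; auto.
- by rewrite IH.
- by rewrite IHa ?IHb // => t Ht; apply: H; apply/In_cat; auto.
Qed.

Lemma eq_map_terms (f g : term -> term) (a : bform) :
  f =1 g -> map_terms f a = map_terms g a.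
Proof. by move=> fg; apply: eq_in_map_terms => t _. Qed.

Lemma map_terms_comp (f g : term -> term) (a : bform) :
  map_terms f (map_terms g a) = map_terms (f \o g) a.
Proof.
elim: a => //= [P ts|a ->|a -> b ->] //.
by congr BP; apply: val_inj; rewrite /= -map_comp.
Qed.

Lemma map_terms_id (a : bform) : map_terms id a = a.
Proof.
elim: a => //= [P ts|a ->|a -> b ->] //.
by congr BP; apply: val_inj; rewrite /= map_id.
Qed.

Lemma bterms_map_terms (f : term -> term) (a : bform) t :
  List.In t (bterms (map_terms f a)) -> exists2 u, List.In u (bterms a) & t = f u.
Proof.
elim: a => /= [P ts /In_map [u [<-]]|t1 t2|t1 t2|//|a IHa b IHb]; first by exists u.
- by case=> [<-|[<-|[]]]; [exists t1|exists t2]; auto.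
- by case=> [<-|[<-|[]]]; [exists t1|exists t2]; auto.
by case/In_cat=> [/IHa|/IHb] [u Hu ->]; exists u; rewrite // In_cat; auto.
Qed.

Lemma emb_bigOrB (l : seq bform) : emb (bigOrB l) = bigOrF (map (@emb _ _ _) l).
Proof. by elim: l => [|a [|b l] IH] //=; rewrite IH. Qed.

Lemma term_eqbP (s t : term) : term_eqb s t -> s = t.
Proof. by case: s => [a|[]]; case: t => [b|[]] //= /eqP ->. Qed.

Lemma other_neq z : other z <> z.
Proof. by case: z. Qed.

Lemma var_cases z z' : z' = z \/ z' = other z.
Proof. by case: z; case: z'; auto. Qed.

Definition upd (D : Type) (s : D * D) (v : var) (d : D) : D * D :=
  match v with vx => (d, s.2) | vy => (s.1, d) end.

Section Semantics.
Variable M : model arity Cons.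
Local Notation st := (dom M * dom M)%type.

Lemma bsat_map_terms (h : term -> term) (s s' : st) (a : bform) :
  (forall t, List.In t (bterms a) -> teval s (h t) = teval s' t) ->
  (bsat s (map_terms h a) <-> bsat s' a).
Proof.
elim: a => /= [P ts|t1 t2|t1 t2|a IH|a IHa b IHb] H.
- suff -> : map_tuple (teval s) (map_tuple h ts) = map_tuple (teval s') ts by [].
  by apply: val_inj; rewrite /= -map_comp; apply: map_In_ext.
- by rewrite !H //; auto.
- by rewrite !H //; auto.
- by rewrite IH.
- by rewrite IHa ?IHb // => t Ht; apply: H; apply/In_cat; auto.
Qed.

Lemma bsat_agree (s s' : st) (a : bform) :
  (forall t, List.In t (bterms a) -> teval s t = teval s' t) ->
  (bsat s a <-> bsat s' a).
Proof. by move=> H; rewrite -{1}(map_terms_id a); apply: bsat_map_terms. Qed.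

Lemma bsat_bsubst_var (s : st) c v (a : bform) :
  bsat s (bsubst (tc c) (tv v) a) <-> bsat (upd s v (icons M c)) a.
Proof.
rewrite bsubstE; apply: bsat_map_terms => -[c'|w] _ /=; first by case: v.
by case: v; case: w.
Qed.

Lemma upd_other_eq (s u : st) z :
  Defs.sval u z = Defs.sval s z -> u = upd s (other z) (Defs.sval u (other z)).
Proof. by case: z; case: u => u1 u2; case: s => s1 s2 /= ->. Qed.

Lemma sat_emb (s : st) (a : bform) : sat s (emb a) <-> bsat s a.
Proof. by elim: a => //= [a IH|a IHa b IHb]; rewrite ?IH ?IHa ?IHb. Qed.

Lemma sat_BOT (s : st) : ~ sat s BOT.
Proof. by apply. Qed.

Lemma sat_fImp (s : st) p q : sat s (fImp p q) <-> (sat s p -> sat s q).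
Proof.
by split=> [H Hp|H [Hp Hq]]; [apply: NNPP => Hq; apply: H | apply/Hq/H].
Qed.

Lemma sat_fIff (s : st) p q : sat s (fIff p q) <-> (sat s p <-> sat s q).
Proof.
have -> : sat s (fIff p q) <-> sat s (fImp p q) /\ sat s (fImp q p) by [].
by rewrite !sat_fImp; tauto.
Qed.

Lemma sat_bigAnd (s : st) (l : seq form) :
  sat s (bigAnd l) <-> forall p, List.In p l -> sat s p.
Proof.
elim: l => [|p [|q l] IH] /=; first by split => // _ q [].
  by split=> [H r [<-|[]] | ]; [|apply; left].
rewrite IH; split=> [[Hp Hl] r [<-|Hr] | H]; auto.
Qed.

Lemma sat_bigOrF (s : st) (l : seq form) :
  sat s (bigOrF l) <-> exists2 p, List.In p l & sat s p.
Proof.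
elim: l => [|p [|q l] IH] /=; first by split=> [H|[p []]]; exfalso; apply: H.
  by split=> [|[r [<-|[]]]]; [exists p; auto|].
rewrite /= in IH *; rewrite not_nor IH.
split=> [[Hp|[r Hr Hs]] | [r [<-|Hr] Hs]]; [exists p | exists r | left | right; exists r]; auto.
Qed.

Lemma bsat_bigOrB (s : st) (l : seq bform) :
  bsat s (bigOrB l) <-> exists2 a, List.In a l & bsat s a.
Proof.
rewrite -sat_emb emb_bigOrB sat_bigOrF.
split=> [[_ /In_map [a [<- al]] /sat_emb] | [a al /sat_emb]]; first by exists a.
by exists (emb a) => //; apply/In_map; exists a.
Qed.

Lemma sat_peval (s : st) p : sat s p <-> peval (fun q => `[< sat s q >]) p.
Proof.
elim: p => /=; try by move=> *; split => /asboolP.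
- by move=> p IH; rewrite IH; split=> /negP.
- by move=> p IHp q IHq; rewrite IHp IHq; split=> [[-> ->]|/andP].
Qed.

Lemma sat_kphi (s : st) z as_ bs :
  sat s (kphi z as_ bs) <->
  (forall a, List.In a as_ -> sat s (FKa z a)) /\
  (forall b, List.In b bs -> sat s (dia z b)).
Proof.
rewrite sat_bigAnd; split=> [H | [H1 H2] p /In_cat [] /In_map [x [<- Hx]]]; auto.
by split=> x Hx; apply: H; apply/In_cat; [left|right]; apply/In_map; exists x.
Qed.

Lemma sat_Kzeq (s : st) z z' (T : {set Cons}) :
  sat s (Kzeq arity z z' T) <->
  (forall c, c \in T -> sat s (dia z (beq (tv z') (tc c)))) /\
  (forall c, c \notin T -> sat s (FKa z (BNeg (beq (tv z') (tc c))))).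
Proof.
rewrite sat_bigAnd; split=> [H | [H1 H2] p /In_cat [] /In_map [c [<- /In_enum Hc]]].
- by split=> c Hc; apply: H; apply/In_cat; [left|right]; apply/In_map;
    exists c; split=> //; rewrite In_enum ?inE.
- exact: H1.
- by apply: H2; rewrite inE in Hc.
Qed.

Lemma In_all_terms c : List.In (tc c) (all_terms Cons).
Proof. by apply/In_cat; left; apply/In_map; exists c; rewrite In_enum. Qed.

Lemma bsat_Dn (s : st) m t1 t2 :
  bsat s (Dn arity m t1 t2) <-> DD m (teval s t1) (teval s t2).
Proof.
elim: m t2 => [|m IH] t2 /=; first by split=> ->.
rewrite not_nor bsat_bigOrB IH; apply: or_iff_compat_l; split.
  move=> [_ /In_map [t [<- _]] /= [Hm /not_nor Hr]].
  by exists (teval s t); split; first exact/IH.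
case=> u [Hm Hr]; have [c cu] := icons_onto u; subst u.
exists (BAnd (Dn arity m t1 (tc c)) (bOr (BR arity (tc c) t2) (BR arity t2 (tc c)))).
  by apply/In_map; exists (tc c); split=> //; apply: In_all_terms.
by rewrite /= IH not_nor.
Qed.

Lemma DD_refl m d : DD (M := M) m d d.
Proof. by elim: m => [|m IH] /=; auto. Qed.

End Semantics.

(** * Soundness *)

Lemma kphi_shift (M : model arity Cons) (s s' : dom M * dom M) z as_ bs :
  sits s -> sits s' -> sim z s' s ->
  sat s (kphi z as_ bs) -> sat s' (kphi z as_ bs).
Proof.
move=> Hs Hs' Hss; rewrite !sat_kphi => -[H1 H2]; split.
- by move=> a Ha u Hu Hus; apply: (H1 a Ha u Hu); apply: (sim_trans Hu Hs' Hs Hus Hss).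
- move=> b Hb Hn; apply: (H2 b Hb) => u Hu Hus; apply: Hn => //.
  by apply: (sim_trans Hu Hs Hs' Hus); apply: sim_sym.
Qed.

Section Isolate.
Variables (M : model arity Cons) (z : var) (s0 : dom M * dom M).

Definition isolate_sim (w : var) (u v : dom M * dom M) :=
  sim w u v /\ (w = z -> (u = s0 <-> v = s0)).

Lemma isolate_sim_refl w s : sits s -> isolate_sim w s s.
Proof. by move=> Hs; split; [apply: sim_refl | tauto]. Qed.

Lemma isolate_sim_sym w s s' :
  sits s -> sits s' -> isolate_sim w s s' -> isolate_sim w s' s.
Proof. by move=> Hs Hs' [H1 H2]; split; [apply: sim_sym | move=> /H2; tauto]. Qed.

Lemma isolate_sim_trans w s1 s2 s3 : sits s1 -> sits s2 -> sits s3 ->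
  isolate_sim w s1 s2 -> isolate_sim w s2 s3 -> isolate_sim w s1 s3.
Proof.
move=> H1 H2 H3 [A1 B1] [A2 B2]; split; first exact: (sim_trans H1 H2 H3).
by move=> Hw; move: (B1 Hw) (B2 Hw); tauto.
Qed.

Definition isolate : model arity Cons :=
  @Model Pred arity Cons (dom M) (@interp _ _ _ M) (@relR _ _ _ M)
    (@relR_serial _ _ _ M) (@icons _ _ _ M) (@icons_onto _ _ _ M)
    (@sits _ _ _ M) (@sits_ne _ _ _ M) isolate_sim
    isolate_sim_refl isolate_sim_sym isolate_sim_trans.

Lemma ksight_isolate k : ksight M k -> ksight isolate k.
Proof. by move=> H w s s' Hs Hs' [Hw _]; apply: H. Qed.

Lemma sat_isolate_kphi (s : dom M * dom M) as_ bs :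
  sat (M := isolate) s (kphi (other z) as_ bs) <-> sat (M := M) s (kphi (other z) as_ bs).
Proof.
have E u : isolate_sim (other z) u s <-> sim (other z) u s.
  by split=> [[]|H] //; split=> // /other_neq.
rewrite !sat_kphi /=; split; case=> H1 H2; split.
- by move=> a Ha u Hu /E; apply: (H1 a Ha u Hu).
- by move=> b Hb Hn; apply: (H2 b Hb) => u Hu /E; apply: Hn.
- by move=> a Ha u Hu /E; apply: (H1 a Ha u Hu).
- by move=> b Hb Hn; apply: (H2 b Hb) => u Hu /E; apply: Hn.
Qed.

Lemma sat_isolate_Ka (a : bform) :
  sits s0 -> sat (M := isolate) s0 (FKa z a) <-> bsat (M := M) s0 a.
Proof.
move=> Hs0; split=> [H | Ha u Hu [_ /(_ erefl) Hu']]; last by rewrite (Hu'.2 erefl).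
by apply: H => //; apply: isolate_sim_refl.
Qed.

End Isolate.

Section Soundness.
Variable k : nat.

Definition valid (p : form) :=
  forall M : model arity Cons, ksight M k -> forall s : dom M * dom M, sits s -> sat s p.

Lemma valid_ksight z t : valid (fImp (emb (Dn arity k (tv z) t)) (FKt arity z t)).
Proof.
move=> M HM s Hs; apply/sat_fImp; rewrite sat_emb bsat_Dn => H u Hu Hus.
case: t H => [c|z'] //= H; symmetry; apply: (HM z s u Hs Hu) => //.
exact: sim_sym.
Qed.

Lemma valid_KGround z (T : {set Cons}) a :
  valid (fImp (Kzeq arity z (other z) T)
          (fIff (FKa z a)
             (bigAnd [seq emb (bsubst (tc c) (tv (other z)) a) | c <- enum T]))).
Proof.
move=> M HM s Hs; apply/sat_fImp; rewrite sat_Kzeq => -[Tposs Timposs].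
rewrite sat_fIff sat_bigAnd.
have same_z u : sits u -> sim z u s -> u = upd s (other z) (Defs.sval u (other z)).
  move=> Hu Hus; apply: upd_other_eq; symmetry.
  by apply: (HM z s u Hs Hu); [apply: sim_sym | apply: DD_refl].
split=> [HK _ /In_map [c [<- /In_enum cT]] | HA u Hu Hus].
  apply/sat_emb/bsat_bsubst_var; apply: NNPP => Hn.
  by apply: (Tposs c cT) => u Hu Hus /= ucs; apply: Hn; rewrite -ucs -same_z //; apply: HK.
have [c uc] := icons_onto (Defs.sval u (other z)).
have [cT|cNT] := boolP (c \in T); last by case: (Timposs c cNT u Hu Hus).
rewrite (same_z u Hu Hus) -uc -bsat_bsubst_var -sat_emb; apply: HA.
by apply/In_map; exists c; rewrite In_enum.
Qed.

Lemma valid_KAdd z as_ bs a :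
  valid (fImp (kphi z as_ bs) (emb a)) -> valid (fImp (kphi z as_ bs) (FKa z a)).
Proof.
move=> IH M HM s Hs; apply/sat_fImp => Hk u Hu Hus.
by apply/sat_emb; move/sat_fImp: (IH M HM u Hu); apply; apply: (kphi_shift Hs).
Qed.

Lemma valid_KElim z as_ bs a b :
  valid (fImp (kphi (other z) as_ bs) (fImp (FKa z a) (emb b))) ->
  valid (fImp (kphi (other z) as_ bs) (fImp (emb a) (emb b))).
Proof.
move=> IH M HM s Hs; apply/sat_fImp => Hk; apply/sat_fImp; rewrite sat_emb => Ha.
move: (IH _ (ksight_isolate (z := z) (s0 := s) HM) s Hs).
rewrite sat_fImp sat_isolate_kphi sat_fImp sat_isolate_Ka // => /(_ Hk Ha) /sat_emb Hb.
by apply/sat_emb.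
Qed.

Lemma valid_StructK z (T : seq term) a :
  (forall t, List.In t (bterms a) -> List.In t T) ->
  valid (fImp (FAnd (KT arity z T) (emb a)) (FKa z a)).
Proof.
move=> aT M _ s _; apply/sat_fImp => -[/sat_bigAnd KTs /sat_emb Ha] u Hu Hus.
have agree t : List.In t (bterms a) -> teval u t = teval s t.
  by move/aT=> Tt; apply: (KTs (FKt arity z t)) => //; apply/In_map; exists t.
exact/(bsat_agree agree).
Qed.

Lemma prov_sound p : prov k p -> valid p.
Proof.
elim=> {p}.
- by move=> p Ht M _ s _; apply/sat_peval.
- by [].
- by move=> t1 t2 M _ s _; apply/sat_fImp => /= ->.
- by move=> t1 t2 t3 M _ s _; apply/sat_fImp => /= -[-> ->].
- move=> t1 t2 a M _ s _; apply/sat_fImp => H; rewrite sat_fIff !sat_emb bsubstE.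
  by symmetry; apply: bsat_map_terms => t _; rewrite /tsubst; case: ifP => // /term_eqbP ->.
- move=> p q _ IHpq _ IHp M HM s Hs.
  by move/sat_fImp: (IHpq M HM s Hs); apply; apply: IHp.
- move=> c M _ s _; apply/sat_bigOrF.
  have [e ce] := relR_serial (icons M c); have [t te] := icons_onto e.
  exists (FR arity (tc c) (tc t)); last by rewrite /= te.
  by apply/In_map; exists t; rewrite In_enum.
- move=> z M _ s _; apply/sat_bigOrF.
  have [c cz] := icons_onto (Defs.sval s z).
  by exists (feq (tv z) (tc c)); [apply/In_map; exists c; rewrite In_enum | ].
- exact: valid_ksight.
- move=> z a b M _ s _; apply/sat_fImp => Kab; apply/sat_fImp => Ka u Hu Hus.
  by apply: NNPP => Hb; apply: (Kab u Hu Hus); split=> //; apply: Ka.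
- move=> z a M _ s Hs; apply/sat_fImp => H; apply/sat_emb.
  by apply: H => //; apply: sim_refl.
- exact: valid_KGround.
- by move=> z as_ bs a _ _; apply: valid_KAdd.
- by move=> z as_ bs a b _ _; apply: valid_KElim.
- move=> z t c M _ s _; apply/sat_fImp => tc_eq; rewrite sat_fIff /=.
  by split=> H u Hu Hus; rewrite H.
- exact: valid_StructK.
Qed.

End Soundness.

(** * Derived theorems and maximal consistent sets *)

Section Derivations.
Variable k : nat.

Lemma prov_dia_top z : prov k (dia z bTOP).
Proof.
apply: (@prov_taut_consequence k [:: TOP; fImp (FKa z (BNeg bTOP)) (emb (BNeg bTOP))]).
- by move=> p [<-|[<-|[]]]; [apply: prov_fTop | apply: Ax_T].
- case_valuation.
Qed.

(* Necessitation is derived from K-Additivity with the premise [<K_z> T]. *)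
Lemma prov_K_nec z (a : bform) : prov k (emb a) -> prov k (FKa z a).
Proof.
move=> Ha; have Kadd : prov k (fImp (kphi z [::] [:: bTOP]) (FKa z a)).
  apply: R_KAdd => //; apply: (@prov_taut_consequence k [:: emb a]) => [p [<-|[]] //|].
  case_valuation.
apply: (@prov_taut_consequence k [:: fImp (kphi z [::] [:: bTOP]) (FKa z a); dia z bTOP]).
- by move=> p [<-|[<-|[]]]; [apply: Kadd | apply: prov_dia_top].
- case_valuation.
Qed.

(* Wherever [z' = c], [z'] is within sight of [z] by [Dc], so [z] knows [z' = c]; this is
   incompatible with the possibility of [z' = c'] for [c' <> c]. *)
Lemma prov_sight_excludes z c c' :
  let z' := other z in
  let Dc := bsubst (tc c) (tv z') (Dn arity k (tv z) (tv z')) in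
  prov k (fImp (kphi z [:: Dc; BNeg (beq (tc c) (tc c'))] [:: beq (tv z') (tc c')])
               (FKa z (BNeg (beq (tv z') (tc c))))).
Proof.
move=> z' Dc; apply: R_KAdd => //.
set e1 := beq (tv z') (tc c); set e2 := beq (tv z') (tc c'); set e3 := beq (tc c) (tc c').
have K_e3_e1_e2 : prov k (FKa z (bImp (BNeg e3) (bImp e1 (BNeg e2)))).
  apply: prov_K_nec; apply: (@prov_taut_consequence k
    [:: fImp (emb e1) (feq (tc c) (tv z')); fImp (FAnd (feq (tc c) (tv z')) (emb e2)) (emb e3)]).
  - by move=> p [<-|[<-|[]]]; [apply: Ax_A2 | apply: Ax_A3].
  - case_valuation.
apply: (@prov_taut_consequence k [:: TOP;
   fImp (FKa z Dc) (emb Dc);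
   fImp (emb e1) (feq (tc c) (tv z'));
   fImp (feq (tc c) (tv z')) (fIff (emb (Dn arity k (tv z) (tv z'))) (emb Dc));
   fImp (emb (Dn arity k (tv z) (tv z'))) (FKt arity z (tv z'));
   fImp (emb e1) (fIff (FKt arity z (tv z')) (FKa z e1));
   fImp (FKa z (bImp e1 (BNeg e2))) (fImp (FKa z e1) (FKa z (BNeg e2)));
   fImp (FKa z (bImp (BNeg e3) (bImp e1 (BNeg e2))))
        (fImp (FKa z (BNeg e3)) (FKa z (bImp e1 (BNeg e2))));
   FKa z (bImp (BNeg e3) (bImp e1 (BNeg e2)))]).
- move=> p [<-|[<-|[<-|[<-|[<-|[<-|[<-|[<-|[<-|[]]]]]]]]]].
  + exact: prov_fTop.
  + exact: Ax_T.
  + exact: Ax_A2.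
  + exact: Ax_A4.
  + exact: Ax_ksight.
  + exact: Ax_DeRe.
  + exact: Ax_K.
  + exact: Ax_K.
  + exact: K_e3_e1_e2.
- case_valuation.
Qed.

Lemma consistent_subset (S S' : form -> Prop) :
  (forall p, S p -> S' p) -> consistent k S' -> consistent k S.
Proof. by move=> SS' S'cons [l [lS Hl]]; apply: S'cons; exists l; split=> // p /lS /SS'. Qed.

Definition maximal (G : form -> Prop) :=
  forall p, consistent k (fun q => G q \/ q = p) -> G p.

Section MaximalConsistent.
Variables (G : form -> Prop) (Gcons : consistent k G) (Gmax : maximal G).

Lemma mcs_refute p : ~ G p ->
  exists2 l, (forall q, List.In q l -> G q) & prov k (fImp (bigAnd l) (FNeg p)).
Proof.
move=> Gp; have /NNPP [l [lGp Hl]] : ~ consistent k (fun q => G q \/ q = p) by move/Gmax.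
exists (filter (fun q => `[< G q >]) l) => [q /In_filter [_ /asboolP] //|].
apply: (@prov_taut_consequence k [:: TOP; fImp (bigAnd l) BOT]).
  by move=> q [<-|[<-|[]]] //; apply: prov_fTop.
move=> v /= /and3P [vTop vl _]; rewrite peval_bigAnd // in vl.
rewrite peval_bigAnd // negbK; apply/negP => /andP [vG vp].
suff vall : all (peval v) l by rewrite vall vTop in vl.
apply/allIn => q ql; case: (lGp q ql) => [Gq|-> //].
by apply: (proj1 (allIn _ _) vG); apply/In_filter; split => //; apply/asboolP.
Qed.

Lemma mcs_closed (ps : seq form) p :
  (forall q, List.In q ps -> G q) -> prov k (fImps ps p) -> G p.
Proof.
move=> psG Hps; apply: NNPP => /mcs_refute [l lG Hl]; apply: Gcons.
exists (ps ++ l); split; first by move=> q /In_cat [/psG|/lG].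
apply: (@prov_taut_consequence k [:: TOP; fImps ps p; fImp (bigAnd l) (FNeg p)]).
  by move=> q [<-|[<-|[<-|[]]]] //; apply: prov_fTop.
move=> v /= /and4P [vTop vps vl _]; rewrite !peval_bigAnd // all_cat in vl *.
rewrite peval_fImps vTop in vps *; move: vps vl.
by case: (all _ ps); case: (all _ l); case: (peval v p).
Qed.

Lemma mcs_prov p : prov k p -> G p.
Proof. exact: (@mcs_closed [::]). Qed.

Lemma mcs_taut_consequence (ps : seq form) p : (forall q, List.In q ps -> G q) ->
  (forall v, peval v TOP -> all (peval v) ps -> peval v p) -> G p.
Proof.
move=> psG conseq; apply: (mcs_closed psG).
apply: (@prov_taut_consequence k [:: TOP]) => [q [<-|[]] //|]; first exact: prov_fTop.
by move=> v /= /andP [vTop _]; rewrite peval_fImps; apply/implyP/conseq.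
Qed.

Lemma mcs_neg p : G (FNeg p) <-> ~ G p.
Proof.
split=> [Gnp Gp | /mcs_refute [l lG Hl]].
  apply: Gcons; exists [:: p; FNeg p]; split=> [q [<-|[<-|[]]] //|].
  by apply: Ax_Tau; case_valuation.
apply: (mcs_closed lG); apply: (@prov_taut_consequence k [:: TOP; fImp (bigAnd l) (FNeg p)]).
  by move=> q [<-|[<-|[]]] //; apply: prov_fTop.
move=> v /= /and3P [vTop vl _]; rewrite peval_fImps; rewrite peval_bigAnd // in vl.
by move: vl => /=; case: (all _ l); case: (peval v p).
Qed.

Lemma mcs_and p q : G (FAnd p q) <-> G p /\ G q.
Proof.
split=> [Gpq | [Gp Gq]].
  by split; apply: (@mcs_taut_consequence [:: FAnd p q]) => [r [<-|[]] //|]; case_valuation.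
by apply: (@mcs_taut_consequence [:: p; q]) => [r [<-|[<-|[]]] //|]; case_valuation.
Qed.

Lemma mcs_MP p q : G (fImp p q) -> G p -> G q.
Proof.
move=> Gpq Gp.
by apply: (@mcs_taut_consequence [:: fImp p q; p]) => [r [<-|[<-|[]]] //|]; case_valuation.
Qed.

Lemma mcs_iff p q : G (fIff p q) -> (G p <-> G q).
Proof.
move=> Gpq; split=> [Gp | Gq].
  by apply: (@mcs_taut_consequence [:: fIff p q; p]) => [r [<-|[<-|[]]] //|]; case_valuation.
by apply: (@mcs_taut_consequence [:: fIff p q; q]) => [r [<-|[<-|[]]] //|]; case_valuation.
Qed.

Lemma mcs_bigAnd l : G (bigAnd l) <-> forall p, List.In p l -> G p.
Proof.
elim: l => [|p [|q l] IH] /=.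
- by split=> // _; apply/mcs_prov/prov_fTop.
- by split=> [Gp r [<-|[]] | ]; [|apply; left].
- by rewrite mcs_and IH; split=> [[Gp Gl] r [<-|Hr] | H]; auto.
Qed.

Lemma mcs_bigOrF l : G (bigOrF l) -> exists2 p, List.In p l & G p.
Proof.
elim: l => [|p [|q l] IH] /=.
- by move/mcs_neg; case; apply/mcs_prov/prov_fTop.
- by exists p; auto.
have [Gp|Gnp] := classic (G p); first by exists p; auto.
move=> Gor; have /IH [r Hr Gr] : G (bigOrF (q :: l)).
  apply: (@mcs_taut_consequence [:: FNeg (FAnd (FNeg p) (FNeg (bigOrF (q :: l)))); FNeg p]).
    by move=> r [<-|[<-|[]]] //; apply/mcs_neg.
  by move=> v _ /=; case: (peval v p); case: (peval v (bigOrF (q :: l))).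
by exists r; auto.
Qed.

(** * The canonical model *)

Lemma mcs_eq_refl t : G (feq t t).
Proof. exact/mcs_prov/Ax_A1. Qed.

Lemma mcs_eq_sym t1 t2 : G (feq t1 t2) -> G (feq t2 t1).
Proof. by apply/mcs_MP/mcs_prov/Ax_A2. Qed.

Lemma mcs_eq_trans t1 t2 t3 : G (feq t1 t2) -> G (feq t2 t3) -> G (feq t1 t3).
Proof.
move=> H12 H23; apply: (mcs_MP (p := FAnd (feq t1 t2) (feq t2 t3))).
  exact/mcs_prov/Ax_A3.
exact/mcs_and.
Qed.

Lemma mcs_eq_subst t1 t2 (a : bform) : G (feq t1 t2) ->
  (G (emb a) <-> G (emb (bsubst t1 t2 a))).
Proof. by move=> H; apply/mcs_iff/(mcs_MP _ H)/mcs_prov/Ax_A4. Qed.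

Definition mcs_eqc (c d : Cons) : bool := `[< G (feq (tc c) (tc d)) >].

Lemma mcs_eqcc c : mcs_eqc c c.
Proof. exact/asboolP/mcs_eq_refl. Qed.

Definition rep (c : Cons) : Cons := xchoose (ex_intro (mcs_eqc c) c (mcs_eqcc c)).

Lemma mcs_eq_rep c : G (feq (tc c) (tc (rep c))).
Proof. exact/asboolP/(xchooseP (ex_intro (mcs_eqc c) c (mcs_eqcc c))). Qed.

Lemma rep_eqP c d : rep c = rep d <-> G (feq (tc c) (tc d)).
Proof.
split=> [cd | Gcd].
  by apply: mcs_eq_trans (mcs_eq_rep c) _; rewrite cd; apply/mcs_eq_sym/mcs_eq_rep.
apply: eq_xchoose => e; apply/asboolP/asboolP => He.
  exact: mcs_eq_trans (mcs_eq_sym Gcd) He.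
exact: mcs_eq_trans Gcd He.
Qed.

Lemma rep_idem c : rep (rep c) = rep c.
Proof. exact/rep_eqP/mcs_eq_sym/mcs_eq_rep. Qed.

Definition rep_term (t : term) : term :=
  if t is TCons c then tc (rep c) else t.

Lemma mcs_rep_terms (a : bform) : G (emb a) <-> G (emb (map_terms rep_term a)).
Proof.
(* Replace the constants of [L] one at a time, by A4 with [c = rep c]. *)
pose rep_in (L : seq Cons) (t : term) :=
  if t is TCons c then (if c \in L then tc (rep c) else t) else t.
suff rep_inP L : G (emb a) <-> G (emb (map_terms (rep_in L) a)).
  rewrite (rep_inP (enum Cons)) (@eq_map_terms _ rep_term) // => -[d|v] //=.
  by rewrite mem_enum.
elim: L => [|c L IH]; first by rewrite (@eq_map_terms _ id) ?map_terms_id // => -[].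
rewrite IH (mcs_eq_subst _ (mcs_eq_sym (mcs_eq_rep c))) bsubstE map_terms_comp.
rewrite (@eq_map_terms _ (rep_in (c :: L))) // => -[d|[]] //=.
rewrite in_cons /tsubst /=; case: (boolP (d \in L)) => dL; rewrite ?orbT ?orbF /=.
  by case: (rep d =P c) => // <-; rewrite rep_idem.
by case: (d =P c) => [->|].
Qed.

Definition cdom : finType := {c : Cons | rep c == c}.

Lemma rep_val (d : cdom) : rep (val d) = val d.
Proof. exact: eqP (valP d). Qed.

Definition ic (c : Cons) : cdom := exist _ (rep c) (introT eqP (rep_idem c)).

Lemma ic_onto (d : cdom) : exists c, ic c = d.
Proof. by exists (val d); apply: val_inj; rewrite /= rep_val. Qed.

Lemma ic_eqP c d : ic c = ic d <-> G (feq (tc c) (tc d)).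
Proof.
rewrite -rep_eqP; split=> [/(congr1 val) // | cd].
by apply: val_inj.
Qed.

Definition cinterp (P : Pred) (ds : (arity P).-tuple cdom) : Prop :=
  G (FP (map_tuple (fun d : cdom => tc (val d)) ds)).

Definition crel (d e : cdom) : Prop := G (FR arity (tc (val d)) (tc (val e))).

Lemma crel_serial (d : cdom) : exists e, crel d e.
Proof.
have [_ /In_map [t [<- _]] Gdt] := mcs_bigOrF (mcs_prov (Ax_Seriality arity k (val d))).
exists (ic t); move/(mcs_rep_terms (BR arity _ _)): Gdt.
by rewrite /crel /= rep_val.
Qed.

Lemma cvar_ex z : exists c, `[< G (feq (tv z) (tc c)) >].
Proof.
have [_ /In_map [c [<- _]] Gzc] := mcs_bigOrF (mcs_prov (Ax_AtSomeWhere arity Cons k z)).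
by exists c; apply/asboolP.
Qed.

Definition cvar (z : var) : Cons := xchoose (cvar_ex z).

Lemma mcs_eq_cvar z : G (feq (tv z) (tc (cvar z))).
Proof. exact/asboolP/(xchooseP (cvar_ex z)). Qed.

(* The set [T] such that [K_z (other z) = T] is in [G]. *)
Definition alt (z : var) : {set Cons} :=
  [set c | `[< G (dia z (beq (tv (other z)) (tc c))) >]].

Lemma in_alt z c : c \in alt z <-> G (dia z (beq (tv (other z)) (tc c))).
Proof. by rewrite inE; split=> /asboolP. Qed.

Lemma cvar_in_alt z : cvar (other z) \in alt z.
Proof.
set e := beq (tv (other z)) (tc (cvar (other z))).
apply/in_alt/(@mcs_taut_consequence [:: emb e; fImp (FKa z (BNeg e)) (emb (BNeg e))]).
- by move=> q [<-|[<-|[]]]; [apply: mcs_eq_cvar | apply/mcs_prov/Ax_T].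
- case_valuation.
Qed.

Definition svar (s : cdom * cdom) (v : var) : cdom :=
  match v with vx => s.1 | vy => s.2 end.

Definition situation (f : var -> Cons) : cdom * cdom := (ic (f vx), ic (f vy)).

Definition pinned (z : var) (c : Cons) (v : var) : Cons :=
  match z, v with vx, vx => cvar vx | vy, vy => cvar vy | _, _ => c end.

Definition csits (s : cdom * cdom) : Prop :=
  exists z c, c \in alt z /\ s = situation (pinned z c).

Definition csim (z : var) (s s' : cdom * cdom) : Prop := svar s z = svar s' z.

Definition s0 : cdom * cdom := situation cvar.

Lemma csits_s0 : csits s0.
Proof. by exists vx, (cvar vy); split; [apply: (cvar_in_alt vx) | ]. Qed.

Lemma csits_ne : exists s, csits s.
Proof. by exists s0; apply: csits_s0. Qed.

Lemma csim_refl z s : csits s -> csim z s s.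
Proof. by []. Qed.

Lemma csim_sym z s s' : csits s -> csits s' -> csim z s s' -> csim z s' s.
Proof. by rewrite /csim => _ _ ->. Qed.

Lemma csim_trans z s1 s2 s3 : csits s1 -> csits s2 -> csits s3 ->
  csim z s1 s2 -> csim z s2 s3 -> csim z s1 s3.
Proof. by rewrite /csim => _ _ _ -> ->. Qed.

Definition canonical_model : model arity Cons :=
  @Model Pred arity Cons cdom cinterp crel crel_serial ic ic_onto csits csits_ne
    csim csim_refl csim_sym csim_trans.
Local Notation CM := canonical_model.


Lemma bsat_ground (s : cdom * cdom) (a : bform) :
  (forall t, List.In t (bterms a) -> exists c, t = tc c) ->
  (bsat (M := CM) s a <-> G (emb (map_terms rep_term a))).
Proof.
elim: a => /= [P ts|t1 t2|t1 t2|a IH|a IHa b IHb] ground.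
- rewrite /cinterp; suff -> : map_tuple (fun d : cdom => tc (val d))
      (map_tuple (teval (M := CM) s) ts) = map_tuple rep_term ts by [].
  by apply: val_inj; rewrite /= -map_comp; apply: map_In_ext => t /ground [c ->].
- have [c1 ->] := ground t1 (or_introl erefl).
  by have [c2 ->] := ground t2 (or_intror (or_introl erefl)).
- have [c1 ->] := ground t1 (or_introl erefl).
  have [c2 ->] := ground t2 (or_intror (or_introl erefl)) => /=.
  by rewrite ic_eqP -!rep_eqP !rep_idem.
- by rewrite mcs_neg IH.
- by rewrite mcs_and IHa ?IHb // => t Ht; apply: ground; apply/In_cat; auto.
Qed.

Definition ground_term (f : var -> Cons) (t : term) : term :=
  if t is TVar v then tc (f v) else t.

Definition ground (f : var -> Cons) : bform -> bform := map_terms (ground_term f).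

Lemma truth_situation (f : var -> Cons) (a : bform) :
  bsat (M := CM) (situation f) a <-> G (emb (ground f a)).
Proof.
rewrite mcs_rep_terms -bsat_ground.
- by symmetry; apply: bsat_map_terms => -[c|[]].
- by move=> t /bterms_map_terms [[c|v] _ ->] /=; eauto.
Qed.

Lemma truth_s0 (a : bform) : bsat (M := CM) s0 a <-> G (emb a).
Proof.
rewrite truth_situation (mcs_eq_subst a (mcs_eq_sym (mcs_eq_cvar vx))).
rewrite (mcs_eq_subst (bsubst _ _ a) (mcs_eq_sym (mcs_eq_cvar vy))) !bsubstE map_terms_comp.
by rewrite (@eq_map_terms _ (ground_term cvar)) // => -[c|[]].
Qed.

Lemma truth_pinned z c (a : bform) :
  bsat (M := CM) (situation (pinned z c)) a <->
  G (emb (bsubst (tc c) (tv (other z)) a)).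
Proof.
rewrite truth_situation (mcs_eq_subst (bsubst _ _ a) (mcs_eq_sym (mcs_eq_cvar z))).
rewrite !bsubstE map_terms_comp (@eq_map_terms _ (ground_term (pinned z c))) //.
by move=> -[d|v] //=; case: z; case: v.
Qed.

Lemma mcs_Kzeq_alt z : G (Kzeq arity z (other z) (alt z)).
Proof.
apply/mcs_bigAnd => p /In_cat [] /In_map [c [<- /In_enum]]; first by move=> /in_alt.
by rewrite inE => /negP cNalt; apply: NNPP => H; apply/cNalt/in_alt/mcs_neg.
Qed.

Lemma mcs_K z (a : bform) : G (FKa z a) <->
  forall c, c \in alt z -> G (emb (bsubst (tc c) (tv (other z)) a)).
Proof.
rewrite (mcs_iff (mcs_MP (mcs_prov (Ax_KGround k z (alt z) a)) (mcs_Kzeq_alt z))).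
rewrite mcs_bigAnd; split=> [H c calt | H p /In_map [c [<- /In_enum]]]; last exact: H.
by apply: H; apply/In_map; exists c; rewrite In_enum.
Qed.

Lemma svar_pinned z c :
  svar (situation (pinned z c)) z = ic (cvar z) /\
  svar (situation (pinned z c)) (other z) = ic c.
Proof. by case: z. Qed.

Lemma csits_pinned z u : csits u -> svar u z = ic (cvar z) ->
  exists2 c, c \in alt z & u = situation (pinned z c).
Proof.
case=> w [c [calt ->]]; case: w calt; case: z => calt /= uz; try by exists c.
- by exists (cvar vx); [apply: (cvar_in_alt vy) | rewrite /situation /= uz].
- by exists (cvar vy); [apply: (cvar_in_alt vx) | rewrite /situation /= uz].
Qed.

Lemma csits_other z u : csits u -> svar u z <> ic (cvar z) ->
  svar u (other z) = ic (cvar (other z)).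
Proof. by case=> w [c [_ ->]]; case: w; case: z. Qed.

Lemma truth_Ka z a : sat (M := CM) s0 (FKa z a) <-> G (FKa z a).
Proof.
have s0z : svar s0 z = ic (cvar z) by case: z.
rewrite mcs_K /=; split=> [H c calt | H u Hu us0].
  apply/truth_pinned/H; first by exists z, c.
  by rewrite /csim (svar_pinned z c).1.
have [c calt ->] := csits_pinned Hu (etrans us0 s0z).
exact/truth_pinned/H.
Qed.

Lemma canonical_truth (p : form) : sat (M := CM) s0 p <-> G p.
Proof.
elim: p => [P ts|t1 t2|t1 t2|z t|p IH|p IHp q IHq|z a].
- exact: (truth_s0 (BP ts)).
- exact: (truth_s0 (BR arity t1 t2)).
- exact: (truth_s0 (beq t1 t2)).
- have [e Gte] : exists e, G (feq t (tc e)).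
    by case: t => [c|v]; [exists c; apply: mcs_eq_refl | exists (cvar v); apply: mcs_eq_cvar].
  rewrite (mcs_iff (mcs_MP (mcs_prov (Ax_DeRe arity k z t e)) Gte)) -truth_Ka /=.
  by have /= -> := proj2 (truth_s0 (beq t (tc e))) Gte.
- by rewrite /= mcs_neg IH.
- by rewrite /= mcs_and IHp IHq.
- exact: truth_Ka.
Qed.

Lemma alt_within_sight z c c' : c \in alt z -> c' \in alt z ->
  DD (M := CM) k (ic (cvar z)) (ic c) -> ic c = ic c'.
Proof.
move=> calt c'alt cseen; apply/ic_eqP; apply: NNPP => cc'.
set Dc := bsubst (tc c) (tv (other z)) (Dn arity k (tv z) (tv (other z))).
have GDc : G (emb Dc).
  by apply/truth_pinned/bsat_Dn; case: z {calt c'alt Dc cc'} cseen.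
have K_Dc : G (FKa z Dc).
  apply/mcs_K => c'' _; move: GDc; rewrite /Dc !bsubstE map_terms_comp.
  rewrite (@eq_map_terms _ (tsubst (tc c) (tv (other z)))) // => -[d|v] //=.
  by case: z {calt c'alt Dc cseen}; case: v.
have K_cc' : G (FKa z (BNeg (beq (tc c) (tc c')))) by apply/mcs_K => c'' _ /=; apply/mcs_neg.
have /in_alt/mcs_neg := calt; apply.
apply: (mcs_MP (mcs_prov (prov_sight_excludes z c c'))).
by apply/mcs_bigAnd => p [<-|[<-|[<-|[]]]] //; apply/in_alt.
Qed.

Lemma ksight_canonical : ksight CM k.
Proof.
move=> z s s' Hs Hs' ss' z'; have ss'z : svar s z = svar s' z := ss'.
change (DD (M := CM) k (svar s z) (svar s z') -> svar s z' = svar s' z').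
have [-> _ //|->] := var_cases z z'.
have [sz|sz] := classic (svar s z = ic (cvar z)); last first.
  by move=> _; rewrite (csits_other Hs sz) (csits_other Hs') // -ss'z.
have [c calt ->] := csits_pinned Hs sz.
have [c' c'alt ->] := csits_pinned Hs' (etrans (esym ss'z) sz).
rewrite !(svar_pinned z _).2 (svar_pinned z _).1.
exact: alt_within_sight.
Qed.

End MaximalConsistent.
End Derivations.

(** * Completeness and compactness *)

Lemma lindenbaum k (G : form -> Prop) : consistent k G ->
  exists2 Gm : form -> Prop, (forall p, G p -> Gm p) & consistent k Gm /\ maximal k Gm.
Proof.
move=> Gcons; pose P (A : set form) := consistent k (fun q => A q \/ G q).
have chainP F : (F `<=` P)%classic -> total_on F subset -> P (\bigcup_(X in F) X)%classic.
  move=> FP Ftot [l [lFG Hl]].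
  have [lG|[X FX lXG]] := In_chain_bigcup Ftot lFG; first by apply: Gcons; exists l.
  by apply: (FP X FX); exists l.
have [A [PA Amax]] := Zorn_bigcup chainP.
exists (fun q => A q \/ G q); first by auto.
split=> // p Ap; apply: NNPP => ApG.
apply: (Amax (fun q => A q \/ q = p)); first by split=> [q|/(_ p (or_intror erefl))]; auto.
by apply: consistent_subset Ap => q [[|->]|]; auto.
Qed.

Lemma strong_completeness k (G : form -> Prop) : consistent k G -> satisfiable k G.
Proof.
case/lindenbaum=> Gm GGm [Gcons Gmax].
exists (canonical_model Gcons Gmax); split; first exact: ksight_canonical.
by exists (s0 Gcons Gmax); split=> [|p /GGm /canonical_truth]; first exact: csits_s0.
Qed.

Lemma finitely_satisfiable_consistent k (G : form -> Prop) :
  (forall l, (forall p, List.In p l -> G p) -> satisfiable k (fun p => List.In p l)) ->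
  consistent k G.
Proof.
move=> Gsat [l [lG Hl]]; have [M [Mk [s [Hs lsat]]]] := Gsat l lG.
by move/sat_fImp: (prov_sound Hl Mk Hs); rewrite sat_bigAnd => /(_ lsat); apply: sat_BOT.
Qed.

End ELCR.

Theorem theorem2 (Pred : Type) (arity : Pred -> nat) (Cons : finType)
    (HCons : 0 < #|Cons|) (k : nat) :
  (forall G : form arity Cons -> Prop, consistent k G -> satisfiable k G) /\
  (forall G : form arity Cons -> Prop,
     (forall l : seq (form arity Cons),
        (forall p, List.In p l -> G p) ->
        satisfiable k (fun p => List.In p l)) ->
     satisfiable k G).
Proof.
split=> G; first exact: strong_completeness.
by move/finitely_satisfiable_consistent; apply: strong_completeness.
Qed.
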